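(* Let $\mathbb{F}_q$ be a finite field, $m$ a positive divisor of $q-1$, $n$ a positive integer, and $f(x)=x^nh\big(x^{\frac{q-1}{m}}\big)\in\mathbb{F}_q[x]$ a polynomial with index $m$ which is $m$-nice over $\mathbb{F}_q$. Let $k$ be a positive integer and $b\in\mathbb{F}_q^*$. If $x\in\mathbb{F}_q$ satisfies $f^{(k)}(x)=b$, then $x^{\frac{q-1}{m}}=\psi_f^{(-k)}\big(b^{\frac{q-1}{m}}\big)$.
   Context: $\mu_m$ is the set of $m$-th roots of unity in $\mathbb{F}_q$. Every $f$ with $f(0)=0$ can be written uniquely as $f(x)=x^nh(x^{\frac{q-1}{m}})$ with $h(0)\ne0$ and $m$ minimal; $m$ is the index. $\psi_f(x)=x^nh(x)^{\frac{q-1}{m}}$, and $f^{(k)},\psi_f^{(k)}$ denote iterates. $f$ is $m$-nice if $\psi_f$ restricted to $\mu_m\setminus\psi_f^{-1}(0)$ is an injective map into $\mu_m$. For $y\in\mu_m$, $\psi_f^{(-k)}(y)$ denotes the element $\xi\in\mu_m$ with $\psi_f^{(k)}(\xi)=y$ (unique by $m$-niceness). *)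

From mathcomp Require Import all_boot all_order all_algebra all_field.
Set Implicit Arguments. Unset Strict Implicit. Unset Printing Implicit Defensive.
Import GRing.Theory.
Local Open Scope ring_scope.

Section Defs.
Variable F : finFieldType.

Definition qm1 : nat := (#|F| - 1)%N.

Definition mu (m : nat) : pred F := fun y => y ^+ m == 1.

Definition has_form (f : {poly F}) (m n : nat) (h : {poly F}) : Prop :=
  [/\ (0 < m)%N, (m %| qm1)%N, h.[0] != 0 &
      f = 'X^n * (h \Po 'X^(qm1 %/ m))].

Definition index_of (f : {poly F}) (m : nat) : Prop :=
  (exists n h, has_form f m n h) /\
  (forall m' n' h', has_form f m' n' h' -> (m <= m')%N).

Definition psi (m n : nat) (h : {poly F}) (x : F) : F :=
  x ^+ n * (h.[x]) ^+ (qm1 %/ m).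

Definition m_nice (m n : nat) (h : {poly F}) : Prop :=
  (forall x, x \in mu m -> psi m n h x != 0 -> psi m n h x \in mu m) /\
  (forall x y, x \in mu m -> y \in mu m -> psi m n h x != 0 -> psi m n h y != 0 ->
     psi m n h x = psi m n h y -> x = y).

(* psi_f^{(-k)}(y): the element xi of mu_m with psi_f^{(k)}(xi) = y
   (chosen by [pick]; 0 if there is none) *)
Definition psi_inv (m n : nat) (h : {poly F}) (k : nat) (y : F) : F :=
  odflt 0 [pick xi | (xi \in mu m) && (iter k (psi m n h) xi == y)].

End Defs.

From mathcomp Require Import all_boot all_order all_algebra all_field.
Import GRing.Theory.
Set Implicit Arguments. Unset Strict Implicit.
Local Open Scope ring_scope.

(* Raising to the power d = (q-1)/m semiconjugates x |-> f(x) = x^n h(x^d) to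
   psi_f(y) = y^n h(y)^d, so x^d is carried along the orbit of x under f by psi_f
   and lands on b^d after k steps.  As x is nonzero (0 is fixed by f and b is not),
   x^d lies in mu_m; since b^d is nonzero, the iterates of psi_f on the way are
   nonzero too, and m-niceness makes the k-th iterate injective on them.
   Neither the minimality of the index m nor k > 0 is needed. *)

Lemma iter_semiconj (T U : Type) (g : T -> T) (g' : U -> U) (s : T -> U) :
  (forall t, s (g t) = g' (s t)) -> forall k t, s (iter k g t) = iter k g' (s t).
Proof. by move=> sg k t; elim: k => //= k <-. Qed.

Section Psi.
Variables (F : finFieldType) (m n : nat) (h : {poly F}).
Hypothesis n_gt0 : (0 < n)%N.

Lemma psi0 : psi m n h 0 = 0.
Proof. by rewrite /psi expr0n eqn0Ngt n_gt0 mul0r. Qed.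

Lemma iter_psi0 k : iter k (psi m n h) 0 = 0.
Proof. exact/iter_fix/psi0. Qed.

Hypothesis nice : m_nice m n h.

Lemma iter_psi_inj k xi eta : xi \in mu m -> eta \in mu m ->
  iter k (psi m n h) xi != 0 ->
  iter k (psi m n h) xi = iter k (psi m n h) eta -> xi = eta.
Proof.
case: nice => psi_mu psi_inj; elim: k xi eta => [|k IH] xi eta xi_mu eta_mu //.
rewrite !iterSr => nz_k E_k.
have nz_xi : psi m n h xi != 0 by apply: contraNneq nz_k => ->; rewrite iter_psi0.
have nz_eta : psi m n h eta != 0.
  by apply: contraNneq nz_k => eta0; rewrite E_k eta0 iter_psi0.
by apply: psi_inj => //; apply: IH => //; apply: psi_mu.
Qed.

Lemma psi_invE k xi y : xi \in mu m -> y != 0 ->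
  iter k (psi m n h) xi = y -> psi_inv m n h k y = xi.
Proof.
move=> xi_mu y_neq0 Exi; rewrite /psi_inv; case: pickP => [eta | none].
  by case/andP=> eta_mu /eqP Eeta; apply: (@iter_psi_inj k); rewrite ?Eeta ?Exi.
by move: (none xi); rewrite xi_mu Exi eqxx.
Qed.

End Psi.

Lemma expf_qm1 (F : finFieldType) (x : F) : x != 0 -> x ^+ qm1 F = 1.
Proof.
move=> x_neq0; apply: (mulfI x_neq0).
by rewrite mulr1 -exprS /qm1 subn1 prednK ?expf_card //; apply/card_gt0P; exists 0.
Qed.

Lemma expf_div_mu (F : finFieldType) (m : nat) (x : F) :
  (m %| qm1 F)%N -> x != 0 -> x ^+ (qm1 F %/ m) \in mu m.
Proof. by move=> m_dvd x_neq0; rewrite unfold_in /mu -exprM divnK ?expf_qm1. Qed.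

Section HasForm.
Variables (F : finFieldType) (m n : nat) (h f : {poly F}).
Hypotheses (n_gt0 : (0 < n)%N) (f_form : has_form f m n h).

Lemma horner_form0 : f.[0] = 0.
Proof.
by case: f_form => _ _ _ ->; rewrite hornerM hornerXn expr0n eqn0Ngt n_gt0 mul0r.
Qed.

Lemma expr_horner_form x :
  f.[x] ^+ (qm1 F %/ m) = psi m n h (x ^+ (qm1 F %/ m)).
Proof.
case: f_form => _ _ _ ->.
by rewrite hornerM hornerXn horner_comp hornerXn /psi exprMn -!exprM mulnC.
Qed.

End HasForm.

Theorem lemma3p5 (F : finFieldType) (m n : nat) (h f : {poly F}) (k : nat) (b x : F) :
  (0 < m)%N -> (m %| qm1 F)%N -> (0 < n)%N ->
  has_form f m n h -> index_of f m -> m_nice m n h ->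
  (0 < k)%N -> b != 0 ->
  iter k (fun y => f.[y]) x = b ->
  x ^+ (qm1 F %/ m) = psi_inv m n h k (b ^+ (qm1 F %/ m)).
Proof.
move=> _ m_dvd n_gt0 f_form _ nice _ b_neq0 fkx.
have x_neq0 : x != 0.
  apply: contraNneq b_neq0 => x0; apply/eqP.
  by rewrite -fkx x0 iter_fix // (horner_form0 n_gt0 f_form).
have psikx : iter k (psi m n h) (x ^+ (qm1 F %/ m)) = b ^+ (qm1 F %/ m).
  by rewrite -(iter_semiconj (expr_horner_form f_form)) fkx.
by rewrite (psi_invE n_gt0 nice (expf_div_mu m_dvd x_neq0) _ psikx) ?expf_neq0.
Qed.
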